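(* Let $n$ be a positive integer, let $c$ be the center of the star $S_n$, let $\nu$ be an end vertex of the path $P_n$, and let $v$ be any vertex of an $n$-vertex tree $T$. Then for every integer $k\geq 0$, $$n_k(c,S_n)\geq n_k(v,T)\geq n_k(\nu,P_n).$$
   Context: A subtree of a graph $G$ is a subgraph of $G$ that is a tree (distinguished as subgraphs), with the empty subtree also allowed. For a vertex $v$ of $G$, $n_k(v,G)$ is the number of subtrees of $G$ with exactly $k$ vertices that contain $v$. $S_n$ is the $n$-vertex star and $P_n$ the $n$-vertex path. *)

From mathcomp Require Import all_boot.
Set Implicit Arguments. Unset Strict Implicit. Unset Printing Implicit Defensive.

Definition simple_graph (V : finType) (e : rel V) : Prop :=
  symmetric e /\ irreflexive e.

Definition edges (V : finType) (e : rel V) : {set {set V}} :=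
  [set [set x; y] | x in V, y in V & e x y].

Definition adjF (V : finType) (F : {set {set V}}) : rel V :=
  fun x y => (x != y) && ([set x; y] \in F).

Definition is_subgraph (V : finType) (e : rel V) (S : {set V}) (F : {set {set V}}) : bool :=
  (F \subset edges e) && [forall f in F, f \subset S].

Definition connectedb (V : finType) (S : {set V}) (F : {set {set V}}) : bool :=
  [forall x in S, forall y in S, connect (adjF F) x y].

(* A duplicate-free sequence has length <= #|V|, so
   quantifying over lengths m <= #|V| is exhaustive. *)
Definition acyclicb (V : finType) (F : {set {set V}}) : bool :=
  [forall m : 'I_(#|V|).+1, forall s : m.-tuple V,
      ~~ [&& uniq s, 2 < m & cycle (adjF F) s]].

(* (S, F) is a tree (the empty tree is allowed). *)
Definition is_tree (V : finType) (S : {set V}) (F : {set {set V}}) : bool :=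
  connectedb S F && acyclicb F.

Definition is_subtree (V : finType) (e : rel V) (S : {set V}) (F : {set {set V}}) : bool :=
  is_subgraph e S F && is_tree S F.

Definition n_k (V : finType) (e : rel V) (k : nat) (v : V) : nat :=
  #|[set SF : {set V} * {set {set V}} |
       [&& is_subtree e SF.1 SF.2, v \in SF.1 & #|SF.1| == k]]|.

Definition is_tree_graph (V : finType) (e : rel V) : bool :=
  is_tree [set: V] (edges e).

Definition star_rel (n : nat) : rel 'I_n :=
  fun i j => ((val i == 0) && (val j != 0)) || ((val j == 0) && (val i != 0)).

Definition path_rel (n : nat) : rel 'I_n :=
  fun i j => ((val i).+1 == val j) || ((val j).+1 == val i).
Arguments star_rel n : clear implicits.
Arguments path_rel n : clear implicits.

(* A subtree of a graph with acyclic edge set is determined by its vertex set,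
   so n_k(v, T) is at most the number of k-sets of vertices through v; in the
   star every such set (through the center) spans a subtree, which gives the
   upper bound.  For the lower bound, the vertex set of a subtree of P_n
   through an end vertex is an initial or final segment, hence determined by
   its size, so n_k(nu, P_n) <= 1; and a tree has a connected k-set through
   any vertex for every 1 <= k <= n, grown one boundary vertex at a time. *)
From mathcomp Require Import all_boot fingroup perm zify.
Set Implicit Arguments. Unset Strict Implicit. Unset Printing Implicit Defensive.

Definition induced_edges (V : finType) (e : rel V) (S : {set V}) : {set {set V}} :=
  [set f in edges e | f \subset S].

Definition ksets_through (V : finType) (v : V) (k : nat) : {set {set V}} :=
  [set S : {set V} | (v \in S) && (#|S| == k)].

Section Subtrees.
Variable V : finType.
Implicit Types (e : rel V) (S : {set V}) (F : {set {set V}}).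

Lemma adjF_sym F : symmetric (adjF F).
Proof. by move=> x y; rewrite /adjF eq_sym setUC. Qed.

Lemma subrel_adjF F F' : F \subset F' -> subrel (adjF F) (adjF F').
Proof. by move=> sFF' x y /andP[xy /(subsetP sFF') xyF']; rewrite /adjF xy xyF'. Qed.

Lemma set2_inj (a b x y : V) : a != b -> [set a; b] = [set x; y] ->
  (a = x /\ b = y) \/ (a = y /\ b = x).
Proof.
move=> ab E.
have /set2P[] : a \in [set x; y] by rewrite -E set21.
all: have /set2P[] : b \in [set x; y] by rewrite -E set22.
all: by move=> ? ?; subst; rewrite ?eqxx in ab; auto.
Qed.

Lemma adjF_edges e a b : adjF (edges e) a b -> e a b || e b a.
Proof.
case/andP=> ab /imset2P[x y _]; rewrite inE => /andP[_ exy] E.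
by case: (set2_inj ab E) => [[-> ->]|[-> ->]]; rewrite exy ?orbT.
Qed.

Lemma mem_edges e a b : e a b -> [set a; b] \in edges e.
Proof. by move=> eab; apply/imset2P; exists a b; rewrite ?inE. Qed.

Lemma acyclicS F F' : F \subset F' -> acyclicb F' -> acyclicb F.
Proof.
move=> sFF' /forallP acF'; apply/forallP=> m; apply/forallP=> s.
apply: contra (forallP (acF' m) s) => /and3P[uniq_s m_gt2 cyc_s].
by rewrite uniq_s m_gt2; apply: sub_cycle cyc_s; apply: subrel_adjF.
Qed.

Lemma connectedb_to S F v :
  (forall a, a \in S -> connect (adjF F) a v) -> connectedb S F.
Proof.
move=> to_v; apply/forallP=> x; apply/implyP=> xS; apply/forallP=> y; apply/implyP=> yS.
by rewrite (connect_trans (to_v x xS)) // (sym_connect_sym (adjF_sym F)) to_v.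
Qed.

Lemma connectedbP S F x y : connectedb S F -> x \in S -> y \in S ->
  connect (adjF F) x y.
Proof. by move=> /forallP/(_ x)/implyP conS /conS/forallP/(_ y)/implyP. Qed.

Lemma connect_exit (r : rel V) S a b : connect r a b -> a \in S -> b \notin S ->
  exists y x, [/\ y \in S, x \notin S & r y x].
Proof.
move=> /connectP[p]; elim: p a => [|z p IHp] a /=; first by move=> _ -> ->.
move=> /andP[raz pz] lb aS bS.
case zS: (z \in S); first exact: IHp pz lb zS bS.
by exists a, z; rewrite zS.
Qed.

Lemma induced_edges_sub e S : induced_edges e S \subset edges e.
Proof. by apply/subsetP=> f; rewrite inE => /andP[]. Qed.

Lemma induced_edgesS e S S' : S \subset S' -> induced_edges e S \subset induced_edges e S'.
Proof.
move=> sSS'; apply/subsetP=> f; rewrite !inE => /andP[-> fS] /=.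
exact: subset_trans fS sSS'.
Qed.

Lemma induced_subgraph e S : is_subgraph e S (induced_edges e S).
Proof.
rewrite /is_subgraph induced_edges_sub; apply/forallP=> f.
by apply/implyP; rewrite inE => /andP[].
Qed.

Lemma induced_subtree e S : acyclicb (edges e) ->
  connectedb S (induced_edges e S) -> is_subtree e S (induced_edges e S).
Proof.
move=> acyc conS; rewrite /is_subtree induced_subgraph /is_tree conS.
exact: acyclicS (induced_edges_sub e S) acyc.
Qed.

(* An edge of F1 missing from F2 would close, with a shortest F2-path between
   its ends, a cycle of e. *)
Lemma subtree_edges_sub e S F1 F2 : irreflexive e -> acyclicb (edges e) ->
  is_subtree e S F1 -> is_subtree e S F2 -> F1 \subset F2.
Proof.
move=> irr acyc /andP[/andP[sF1E F1S] _] /andP[/andP[sF2E _] /andP[conF2 _]].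
apply/subsetP=> f fF1; apply: contraT => fF2.
have /imset2P[x y _] := subsetP sF1E f fF1; rewrite inE => /andP[_ exy] Ef.
have xy : x != y by apply: contraTneq exy => ->; rewrite irr.
have fS : f \subset S by have := forallP F1S f; rewrite fF1.
have xS : x \in S by apply: (subsetP fS); rewrite Ef set21.
have yS : y \in S by apply: (subsetP fS); rewrite Ef set22.
have /connectP[p pth ly] := connectedbP conF2 xS yS.
case: (shortenP pth) ly => p' pth' uniq_p' _ ly.
case: p' pth' uniq_p' ly => [|z [|w q]] pth' uniq_p' /= ly.
- by rewrite ly eqxx in xy.
- by move: pth' => /=; rewrite -ly andbT => /andP[_]; rewrite -Ef (negbTE fF2).
set s := [:: x, z, w & q].
have size_s : size s < #|V|.+1 by rewrite ltnS -(card_uniqP uniq_p') max_card.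
case/and3P: (forallP (forallP acyc (Ordinal size_s)) (in_tuple s)); split=> //.
change (path.cycle (adjF (edges e)) s); rewrite /s /path.cycle rcons_path.
rewrite (sub_path (subrel_adjF sF2E) pth') /=.
by rewrite -ly /adjF eq_sym xy setUC -Ef (subsetP sF1E).
Qed.

Lemma n_k_le_ksets e k v : irreflexive e -> acyclicb (edges e) ->
  n_k e k v <= #|ksets_through v k|.
Proof.
move=> irr acyc; rewrite /n_k -(card_in_imset (f := fst)).
  apply: subset_leq_card; apply/subsetP=> _ /imsetP[SF + ->].
  by rewrite !inE => /and3P[_ -> ->].
move=> [S F1] [S2 F2]; rewrite !inE /= => /andP[st1 _] /andP[st2 _] ES; subst S2.
by congr pair; apply/eqP; rewrite eqEsubset (subtree_edges_sub irr acyc st1 st2)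
  (subtree_edges_sub irr acyc st2 st1).
Qed.

Lemma n_k_gt0_bounds e k v : 0 < n_k e k v -> 0 < k <= #|V|.
Proof.
case/card_gt0P=> [[S F]]; rewrite inE /= => /and3P[_ vS /eqP <-].
by rewrite max_card andbT; apply/card_gt0P; exists v.
Qed.

Lemma connected_kset_exists e v k : connectedb [set: V] (edges e) ->
  0 < k <= #|V| -> exists S, [/\ v \in S, #|S| = k & connectedb S (induced_edges e S)].
Proof.
move=> conV; elim: k => [|[|k] IHk] //= k_le.
  exists [set v]; rewrite set11 cards1; split=> //.
  by apply: (connectedb_to (v := v)) => a /set1P ->.
have [|S [vS cardS conS]] := IHk; first by rewrite /= ltnW.
have /card_gt0P[z] : 0 < #|~: S| by move: k_le; rewrite -(cardsC S) cardS; lia.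
rewrite inE => zNS.
have [y [x [yS xNS /andP[yx yxE]]]] := connect_exit (connectedbP conV (in_setT v) (in_setT z)) vS zNS.
have to_v a : a \in S -> connect (adjF (induced_edges e (x |: S))) a v.
  move=> aS; apply: connect_sub (connectedbP conS aS vS) => p q pq.
  by apply/connect1/(subrel_adjF (induced_edgesS e (subsetUr [set x] S))).
exists (x |: S); rewrite in_setU1 vS orbT cardsU1 xNS cardS; split=> //.
apply: (connectedb_to (v := v)) => a /setU1P[->|]; last exact: to_v.
apply: connect_trans (to_v _ yS); apply: connect1; rewrite adjF_sym /adjF yx inE yxE.
by rewrite subUset !sub1set !in_setU1 yS eqxx orbT.
Qed.

Lemma n_k_tree_gt0 e k v : connectedb [set: V] (edges e) -> acyclicb (edges e) ->
  0 < k <= #|V| -> 0 < n_k e k v.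
Proof.
move=> conV acyc /(connected_kset_exists v conV)[S [vS cardS conS]].
apply/card_gt0P; exists (S, induced_edges e S).
by rewrite inE /= induced_subtree // vS cardS eqxx.
Qed.

End Subtrees.

Lemma card_ksets_through_inj (V W : finType) (g : V -> W) k v : injective g ->
  #|ksets_through v k| <= #|ksets_through (g v) k|.
Proof.
move=> g_inj; rewrite -(card_imset _ (imset_inj g_inj)).
apply/subset_leq_card/subsetP=> _ /imsetP[S + ->]; rewrite !inE => /andP[vS cardS].
by rewrite imset_f // card_imset.
Qed.

Lemma inj_ord_exists (V : finType) n (v : V) (c : 'I_n) : #|V| = n ->
  exists2 g : V -> 'I_n, injective g & g v = c.
Proof.
move=> cardV; pose h x := cast_ord cardV (enum_rank x).
exists (fun x => tperm (h v) c (h x)); last exact: tpermL.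
by move=> x y /perm_inj /cast_ord_inj /enum_rank_inj.
Qed.

Section Star.
Variable n : nat.

Lemma star_adjF (a b : 'I_n) : adjF (edges (star_rel n)) a b -> (val a == 0) || (val b == 0).
Proof. by move/adjF_edges; rewrite /star_rel; case: (val a == 0); case: (val b == 0). Qed.

(* Every edge of a cycle a, b, d, ... meets the center: either b is the center,
   and then so is the successor of d, or a and d both are. *)
Lemma star_acyclic : acyclicb (edges (star_rel n)).
Proof.
have center_eq (p q : 'I_n) : val p == 0 -> val q == 0 -> p = q.
  by move=> /eqP p0 /eqP q0; apply: val_inj; rewrite /= p0 q0.
apply/forallP=> m; apply/forallP=> s; apply/negP=> /and3P[].
move: (size_tuple s); move: (tval s) => l <-; case: l => [|a [|b [|d t]]] //= uniq_s _.
rewrite /path.cycle /= => /and3P[/star_adjF ab0 /star_adjF bd0 cyc_t].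
have [d' d'_in /star_adjF dd'0] :
    exists2 d', d' \in a :: t & adjF (edges (star_rel n)) d d'.
  case: t uniq_s cyc_t => [|w t] _ /=; first by rewrite andbT; exists a; rewrite ?inE.
  by case/andP=> dw _; exists w; rewrite ?inE ?eqxx ?orbT.
move: uniq_s; rewrite !inE => /and4P[/norP[ab /norP[ad _]] /norP[bd bt] _ _].
have [b0 | bN0] := boolP (val b == 0).
  case/orP: dd'0 => [d0 | d'0]; first by rewrite (center_eq _ _ b0 d0) eqxx in bd.
  move: d'_in; rewrite inE (center_eq _ _ d'0 b0) => /orP[/eqP ba | b_t].
    by rewrite ba eqxx in ab.
  by rewrite b_t in bt.
rewrite (negbTE bN0) orbF in ab0; rewrite (negbTE bN0) /= in bd0.
by rewrite (center_eq _ _ ab0 bd0) eqxx in ad.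
Qed.

Lemma star_subtree (c : 'I_n) (S : {set 'I_n}) : val c = 0 -> c \in S ->
  is_subtree (star_rel n) S (induced_edges (star_rel n) S).
Proof.
move=> c0 cS; apply: induced_subtree star_acyclic _.
apply: (connectedb_to (v := c)) => a aS.
have [-> | ac] := eqVneq a c; first exact: connect0.
have aN0 : val a != 0 by apply: contra ac => /eqP a0; apply/eqP/val_inj; rewrite /= a0 c0.
apply: connect1; rewrite /adjF ac inE mem_edges /=.
  by rewrite subUset !sub1set aS cS.
by rewrite /star_rel c0 eqxx aN0 orbT.
Qed.

Lemma ksets_le_n_k_star (c : 'I_n) k : val c = 0 ->
  #|ksets_through c k| <= n_k (star_rel n) k c.
Proof.
move=> c0; pose span S := (S, induced_edges (star_rel n) S).
rewrite /n_k -(card_imset _ (f := span)); last by move=> S S' [].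
apply/subset_leq_card/subsetP=> _ /imsetP[S + ->]; rewrite !inE => /andP[cS cardS].
by rewrite /= (star_subtree c0 cS) cS cardS.
Qed.

End Star.

Section Path.
Variable n : nat.
Implicit Types (S : {set 'I_n}) (F : {set {set 'I_n}}).

Lemma path_adjF (a b : 'I_n) : adjF (edges (path_rel n)) a b ->
  a.+1 = b :> nat \/ b.+1 = a :> nat.
Proof. by move/adjF_edges; rewrite /path_rel -!orbA => /or4P[]/eqP; auto. Qed.

Lemma path_connect_edge F (x y : 'I_n) i : F \subset edges (path_rel n) ->
  connect (adjF F) x y -> x <= i < y ->
  exists a b : 'I_n, [/\ a = i :> nat, b = i.+1 :> nat & [set a; b] \in F].
Proof.
move=> sFE /connectP[p]; elim: p x => [|z p IHp] x /=.
  by move=> _ -> /andP[xi]; rewrite ltnNge xi.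
move=> /andP[xz pz] ly i_range.
have [i_x | i_Nx] := eqVneq i x; last first.
  move/eqP: i_Nx => i_Nx.
  by case: (path_adjF (subrel_adjF sFE xz)) => xz_val; apply: IHp pz ly _; lia.
case: (path_adjF (subrel_adjF sFE xz)) => xz_val.
  by exists x, z; rewrite i_x xz_val; case/andP: xz.
by apply: IHp pz ly _; move: i_range xz_val; rewrite i_x; lia.
Qed.

Lemma path_subtree_convex S F (a b j : 'I_n) : is_subtree (path_rel n) S F ->
  a \in S -> b \in S -> a <= j <= b -> j \in S.
Proof.
move=> /andP[/andP[sFE FS] /andP[conF _]] aS bS /andP[aj jb].
have [-> // | jNb] := eqVneq j b.
have j_lt_b : j < b by rewrite ltn_neqAle jb andbT val_eqE.
have [|j' [j'_succ [j'_val _ j'_edge]]] := path_connect_edge (i := j) sFE (connectedbP conF aS bS).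
  by rewrite aj j_lt_b.
have -> : j = j' by apply: val_inj.
by apply: (subsetP (implyP (forallP FS _) j'_edge)); rewrite set21.
Qed.

Lemma path_subtree_induced S F : is_subtree (path_rel n) S F ->
  F = induced_edges (path_rel n) S.
Proof.
move=> /andP[/andP[sFE FS] /andP[conF _]].
have edge (a b : 'I_n) : a \in S -> b \in S -> a.+1 = b :> nat -> [set a; b] \in F.
  move=> aS bS ab.
  have [|a' [b' [a'_val b'_val ab'_edge]]] :=
    path_connect_edge (i := a) sFE (connectedbP conF aS bS); first by rewrite -ab leqnn ltnSn.
  have -> : a = a' by apply: val_inj.
  by have -> : b = b' by apply: val_inj; rewrite /= b'_val ab.
apply/setP=> f; rewrite inE; apply/idP/andP=> [fF | [/imset2P[x y _ + ->] fS]].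
  by rewrite (subsetP sFE) // (implyP (forallP FS f)).
have [xS yS] : x \in S /\ y \in S by split; apply: (subsetP fS); rewrite ?set21 ?set22.
rewrite inE => /andP[_ /orP[/eqP xy | /eqP yx]]; first exact: edge.
by rewrite setUC; apply: edge.
Qed.

Definition down_closed S := forall a b : 'I_n, a <= b -> b \in S -> a \in S.

Lemma down_closed_sub S S' : down_closed S -> down_closed S' ->
  #|S| <= #|S'| -> S \subset S'.
Proof.
move=> downS downS' card_le; apply/subsetP=> i iS; apply: contraT => iNS'.
pose below := [set j : 'I_n | j < i].
have sS'below : S' \subset below.
  by apply/subsetP=> j jS'; rewrite inE ltnNge; apply: contra iNS' => /downS'; apply.
have sbelowS : i |: below \subset S.
  by apply/subsetP=> j /setU1P[-> // | ]; rewrite inE => /ltnW /downS; apply.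
have := leq_trans (subset_leq_card sbelowS) (leq_trans card_le (subset_leq_card sS'below)).
by rewrite cardsU1 inE ltnn add1n ltnn.
Qed.

Lemma down_closed_card_inj S S' : down_closed S -> down_closed S' ->
  #|S| = #|S'| -> S = S'.
Proof.
move=> downS downS' card_eq; apply/eqP.
by rewrite eqEsubset !down_closed_sub // card_eq.
Qed.

Lemma path_subtree_down_closed S F (nu : 'I_n) : is_subtree (path_rel n) S F ->
  nu \in S -> nu = 0 :> nat -> down_closed S.
Proof.
move=> subtreeS nuS nu0 a b ab bS.
by apply: (path_subtree_convex subtreeS nuS bS); rewrite nu0 ab.
Qed.

Lemma path_subtree_upper_closed S F (nu : 'I_n) : is_subtree (path_rel n) S F ->
  nu \in S -> nu = n.-1 :> nat -> down_closed (~: S).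
Proof.
move=> subtreeS nuS nu_last a b ab; rewrite !inE; apply: contra => aS.
by apply: (path_subtree_convex subtreeS aS nuS); rewrite ab nu_last; have := ltn_ord b; lia.
Qed.

Lemma n_k_path_end_le1 (nu : 'I_n) k : (nu == 0 :> nat) || (nu == n.-1 :> nat) ->
  n_k (path_rel n) k nu <= 1.
Proof.
move=> nu_end; apply/card_le1_eqP=> [[S1 F1] [S2 F2]].
rewrite !inE /= => /and3P[subtree1 nuS1 /eqP card1] /and3P[subtree2 nuS2 /eqP card2].
rewrite (path_subtree_induced subtree1) (path_subtree_induced subtree2).
suff -> : S1 = S2 by [].
case/orP: nu_end => /eqP nu_end.
  apply: down_closed_card_inj; last by rewrite card1 card2.
  - exact: path_subtree_down_closed subtree1 nuS1 nu_end.
  - exact: path_subtree_down_closed subtree2 nuS2 nu_end.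
rewrite -[S1]setCK -[S2]setCK; congr (~: _); apply: down_closed_card_inj.
- exact: path_subtree_upper_closed subtree1 nuS1 nu_end.
- exact: path_subtree_upper_closed subtree2 nuS2 nu_end.
- by apply/eqP; rewrite -(eqn_add2l #|S1|) cardsC card1 -card2 cardsC.
Qed.

End Path.

Theorem lemma2 (n : nat) (hn : 0 < n)
  (c : 'I_n) (hc : val c = 0)
  (nu : 'I_n) (hnu : (val nu == 0) || (val nu == n.-1))
  (V : finType) (e : rel V) (hV : #|V| = n)
  (hsimple : simple_graph e) (htree : is_tree_graph e) (v : V) (k : nat) :
  n_k (star_rel n) k c >= n_k e k v /\ n_k e k v >= n_k (path_rel n) k nu.
Proof.
have [_ irr] := hsimple; have /andP[conV acyc] := htree.
split.
  have [g g_inj gv] := inj_ord_exists v c hV.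
  apply: leq_trans (n_k_le_ksets k v irr acyc) _.
  apply: leq_trans (card_ksets_through_inj k v g_inj) _.
  by rewrite gv ksets_le_n_k_star.
have [-> // | path_gt0] := posnP (n_k (path_rel n) k nu).
apply: leq_trans (n_k_path_end_le1 k hnu) _.
apply: n_k_tree_gt0 conV acyc _.
by rewrite hV -[n]card_ord; apply: n_k_gt0_bounds path_gt0.
Qed.
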